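(* Let $\rho\in(0,+\infty)$ and $\xi\in\mathbb{R}$. On $(r,\phi)\in(0,+\infty)\times\mathbb{S}^1$ with conjugate momenta $(P_r,P_\phi)$ consider $$H_0=\frac{1}{2(1+\rho r^2)}\Big(P_r^2+\frac{P_\phi^2}{r^2}+\xi r^2\Big),$$ associated with the metric $g=(1+\rho r^2)(dr^2+r^2d\phi^2)$, and the quadratic functions $$S_1=\cos(2\phi)\,P_r\frac{P_\phi}{r}+\sin(2\phi)\Big(H_0-\frac{P_\phi^2}{r^2}\Big),\qquad S_2=-\sin(2\phi)\,P_r\frac{P_\phi}{r}+\cos(2\phi)\Big(H_0-\frac{P_\phi^2}{r^2}\Big).$$ Then the superintegrable systems $\{H_0,P_\phi,S_1\}$ and $\{H_0,P_\phi,S_2\}$ (the metric and the functions $H_0,P_\phi,S_1,S_2$) are globally defined on a manifold $M$ diffeomorphic to $\mathbb{R}^2$.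
   Context: $(r,\phi)$ are polar coordinates; the manifold is obtained by adding the origin, i.e. using Cartesian coordinates $x_1=r\cos\phi$, $x_2=r\sin\phi$. *)

From HB Require Import structures.
From mathcomp Require Import all_boot all_order all_algebra.
From mathcomp Require Import all_classical all_reals all_analysis.
Set Implicit Arguments. Unset Strict Implicit. Unset Printing Implicit Defensive.
Import Order.TTheory GRing.Theory Num.Theory.
Import numFieldNormedType.Exports.
Local Open Scope ring_scope.

Fixpoint Ck {R : realType} {V : normedModType R} (k : nat) (f : V -> R) : Prop :=
  match k with
  | O => continuous f
  | S k' => (forall x, differentiable f x) /\ (forall v : V, Ck k' ('D_v f))
  end.

Definition smooth {R : realType} {V : normedModType R} (f : V -> R) : Prop :=
  forall k, Ck k f.

Definition H0 {R : realType} (rho xi r phi Pr Pphi : R) : R :=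
  (Pr ^+ 2 + Pphi ^+ 2 / r ^+ 2 + xi * r ^+ 2) / (2 * (1 + rho * r ^+ 2)).

Definition S1pol {R : realType} (rho xi r phi Pr Pphi : R) : R :=
  cos (2 * phi) * Pr * (Pphi / r)
  + sin (2 * phi) * (H0 rho xi r phi Pr Pphi - Pphi ^+ 2 / r ^+ 2).

Definition S2pol {R : realType} (rho xi r phi Pr Pphi : R) : R :=
  - sin (2 * phi) * Pr * (Pphi / r)
  + cos (2 * phi) * (H0 rho xi r phi Pr Pphi - Pphi ^+ 2 / r ^+ 2).

Definition cart2 {R : realType} (r phi : R) : 'rV[R]_2 :=
  \row_(i < 2) [:: r * cos phi; r * sin phi]`_i.

Definition cartT {R : realType} (r phi p1 p2 : R) : 'rV[R]_4 :=
  \row_(i < 4) [:: r * cos phi; r * sin phi; p1; p2]`_i.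

(* Polar conjugate momenta of the cotangent vector p1 dx1 + p2 dx2
   (canonical cotangent lift of the coordinate change). *)
Definition Pr_of {R : realType} (r phi p1 p2 : R) : R :=
  cos phi * p1 + sin phi * p2.
Definition Pphi_of {R : realType} (r phi p1 p2 : R) : R :=
  r * (- sin phi * p1 + cos phi * p2).

Definition polJac {R : realType} (r phi : R) : 'M[R]_2 :=
  \matrix_(i < 2, j < 2)
    nth 0 (nth [::] [:: [:: cos phi; - r * sin phi]; [:: sin phi; r * cos phi]] i) j.

Definition gpol {R : realType} (rho r : R) : 'M[R]_2 :=
  \matrix_(i < 2, j < 2)
    nth 0 (nth [::] [:: [:: 1 + rho * r ^+ 2; 0]; [:: 0; (1 + rho * r ^+ 2) * r ^+ 2]] i) j.

From HB Require Import structures.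
From mathcomp Require Import all_boot all_order all_algebra.
From mathcomp Require Import all_classical all_reals all_analysis.
From mathcomp Require Import ring lra.
Import Order.TTheory GRing.Theory Num.Theory.
Import numFieldNormedType.Exports.
Local Open Scope ring_scope.

Local Notation "x _[ k ]" := (x ord0 (inord k)) (at level 8).

(* In Cartesian coordinates the metric is the conformally flat
   (1 + rho |x|^2)(dx1^2 + dx2^2), and H0, P_phi, S1, S2 are rational
   functions of (x, p) whose only denominator is a multiple of
   1 + rho |x|^2 > 0; hence they are smooth on all of R^2 x R^2.  To match
   them with the polar expressions, note that (P_r, P_phi / r) is the momentum
   rotated by phi, so p1^2 + p2^2 is invariant while 2 p1 p2 and
   p1^2 - p2^2 are rotated by 2 phi, which is where cos 2phi and sin 2phi
   come from. *)

Section CkClosure.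
Context {R : realType} {V : normedModType R}.
Implicit Types f g : V -> R.

Lemma CkS k f : Ck k.+1 f -> Ck k f.
Proof.
elim: k f => [|k IH] f /= [df Df]; first by move=> x; exact: differentiable_continuous.
by split => // v; apply: IH; apply: Df.
Qed.

Lemma Ck_cst k (c : R) : Ck k (fun _ : V => c).
Proof.
elim: k c => [|k IH] c /=; first by move=> x; exact: cvg_cst.
split=> [x|v]; first exact: differentiable_cst.
rewrite (_ : 'D_v _ = fun _ => 0); first exact: IH.
by apply/funext => x; exact: derive_cst.
Qed.

Lemma Ck_add k f g : Ck k f -> Ck k g -> Ck k (fun x => f x + g x).
Proof.
elim: k f g => [|k IH] f g /=; first by move=> cf cg x; exact: (continuousD (cf x) (cg x)).
move=> [df Df] [dg Dg]; split=> [x|v]; first exact: differentiableD.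
rewrite (_ : 'D_v _ = fun x => 'D_v f x + 'D_v g x); first exact: IH.
by apply/funext => x; apply: deriveD; apply: diff_derivable.
Qed.

Lemma Ck_mul k f g : Ck k f -> Ck k g -> Ck k (fun x => f x * g x).
Proof.
elim: k f g => [|k IH] f g /=; first by move=> cf cg x; exact: (continuousM (cf x) (cg x)).
move=> [df Df] [dg Dg]; split=> [x|v]; first exact: differentiableM.
rewrite (_ : 'D_v _ = fun x => f x * 'D_v g x + g x * 'D_v f x).
  by apply: Ck_add; apply: IH => //; apply: CkS.
by apply/funext => x; apply: deriveM; apply: diff_derivable.
Qed.

Lemma Ck_opp k f : Ck k f -> Ck k (fun x => - f x).
Proof.
move=> cf; rewrite (_ : (fun x => - f x) = fun x => -1 * f x).
  by apply: Ck_mul => //; apply: Ck_cst.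
by apply/funext => x; rewrite mulN1r.
Qed.

Lemma Ck_exp k f n : Ck k f -> Ck k (fun x => f x ^+ n).
Proof.
move=> cf; elim: n => [|n IH]; first exact: Ck_cst.
rewrite (_ : (fun x => _) = fun x => f x * f x ^+ n); first exact: Ck_mul.
by apply/funext => x; rewrite exprS.
Qed.

Lemma Ck_inv k f : (forall x, f x != 0) -> Ck k f -> Ck k (fun x => (f x)^-1).
Proof.
move=> nz; elim: k f nz => [|k IH] f nz /=.
  by move=> cf x; exact: (continuousV (nz x) (cf x)).
move=> [df Df]; split=> [x|v]; first exact: (differentiableV (df x) (nz x)).
rewrite (_ : 'D_v _ = fun x => - ((f x)^-1 * (f x)^-1) * 'D_v f x).
  apply: Ck_mul => //; apply/Ck_opp/Ck_mul; apply: IH => //; exact: CkS.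
apply/funext => x; rewrite deriveV ?nz //; last exact: diff_derivable.
by rewrite expr2 invfM.
Qed.

End CkClosure.

Lemma Ck_coord {R : realType} m n (i : 'I_m) (j : 'I_n) k :
  Ck k (fun x : 'M[R]_(m, n) => x i j).
Proof.
case: k => [|k] /=; first by move=> x; exact/differentiable_continuous/differentiable_coord.
split=> [x|v]; first exact: differentiable_coord.
rewrite (_ : 'D_v _ = fun _ => v i j); first exact: Ck_cst.
apply/funext => x; rewrite deriveE; last exact: differentiable_coord.
have @f : {linear 'M[R]_(m, n) -> R}.
  by exists (fun N : 'M[R]_(_, _) => N i j); do 2![eexists]; do ?[constructor];
     rewrite ?mxE// => ? *; rewrite ?mxE//; move=> ?; rewrite !mxE.
by rewrite (_ : (fun _ => _) = f) // diff_lin //; exact: coord_continuous.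
Qed.

Ltac Ck_poly := repeat first [ apply: Ck_add | apply: Ck_mul | apply: Ck_opp
                             | apply: Ck_exp | apply: Ck_coord | apply: Ck_cst ].

Section Rotation.
Context {R : realType} {c s : R}.
Hypothesis cs1 : c ^+ 2 + s ^+ 2 = 1.

Lemma sqr_norm_rot (p1 p2 : R) :
  p1 ^+ 2 + p2 ^+ 2 = (c * p1 + s * p2) ^+ 2 + (- s * p1 + c * p2) ^+ 2.
Proof. by rewrite -[LHS]mulr1 -cs1; ring. Qed.

Lemma mul_rot (p1 p2 : R) (Pr := c * p1 + s * p2) (Q := - s * p1 + c * p2) :
  p1 * p2 = (c ^+ 2 - s ^+ 2) * Pr * Q + s * c * (Pr ^+ 2 - Q ^+ 2).
Proof.
transitivity ((c ^+ 2 + s ^+ 2) ^+ 2 * (p1 * p2)); first by rewrite cs1 expr1n mul1r.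
by rewrite /Pr /Q; ring.
Qed.

Lemma subr_sqr_rot (p1 p2 : R) (Pr := c * p1 + s * p2) (Q := - s * p1 + c * p2) :
  p1 ^+ 2 - p2 ^+ 2 = (c ^+ 2 - s ^+ 2) * (Pr ^+ 2 - Q ^+ 2) - 4 * s * c * Pr * Q.
Proof.
transitivity ((c ^+ 2 + s ^+ 2) ^+ 2 * (p1 ^+ 2 - p2 ^+ 2)); first by rewrite cs1 expr1n mul1r.
by rewrite /Pr /Q; ring.
Qed.

End Rotation.

Lemma cos_double {R : realType} (phi : R) : cos (2 * phi) = cos phi ^+ 2 - sin phi ^+ 2.
Proof. by rewrite mulr2n mulrDl !mul1r cosD !expr2. Qed.

Lemma sin_double {R : realType} (phi : R) : sin (2 * phi) = 2 * sin phi * cos phi.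
Proof. by rewrite mulr2n mulrDl !mul1r sinD; ring. Qed.

Section CartesianSystem.
Context {R : realType} (rho xi : R).
Hypothesis rho_ge0 : 0 <= rho.

Definition conformal_factor (x1 x2 : R) : R := 1 + rho * (x1 ^+ 2 + x2 ^+ 2).

Lemma conformal_factor_gt0 x1 x2 : 0 < conformal_factor x1 x2.
Proof.
rewrite /conformal_factor; have : 0 <= rho * (x1 ^+ 2 + x2 ^+ 2).
  by rewrite mulr_ge0 // addr_ge0 ?sqr_ge0.
lra.
Qed.

Lemma conformal_factor_neq0 x1 x2 : conformal_factor x1 x2 != 0.
Proof. exact/lt0r_neq0/conformal_factor_gt0. Qed.

Lemma conformal_factor2_neq0 x1 x2 : 2 * conformal_factor x1 x2 != 0.
Proof. by rewrite mulf_neq0 ?conformal_factor_neq0 ?pnatr_eq0. Qed.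

Definition Hcart (x1 x2 p1 p2 : R) : R :=
  (p1 ^+ 2 + p2 ^+ 2 + xi * (x1 ^+ 2 + x2 ^+ 2)) / (2 * conformal_factor x1 x2).

Definition Pphi_cart (x1 x2 p1 p2 : R) : R := x1 * p2 - x2 * p1.

Definition S1cart (x1 x2 p1 p2 : R) : R :=
  p1 * p2 + x1 * x2 * (xi - rho * (p1 ^+ 2 + p2 ^+ 2)) / conformal_factor x1 x2.

Definition S2cart (x1 x2 p1 p2 : R) : R :=
  (p1 ^+ 2 - p2 ^+ 2) / 2
  + (x1 ^+ 2 - x2 ^+ 2) * (xi - rho * (p1 ^+ 2 + p2 ^+ 2)) / (2 * conformal_factor x1 x2).

Definition conformal_metric (x : 'rV[R]_2) : 'M[R]_2 :=
  conformal_factor x _[0] x _[1] *: 1%:M.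

Lemma conformal_metric_sym x : (conformal_metric x)^T = conformal_metric x.
Proof. by rewrite /conformal_metric linearZ /= trmx1. Qed.

Lemma conformal_metric_pos x (u : 'rV[R]_2) :
  u != 0 -> 0 < (u *m conformal_metric x *m u^T) ord0 ord0.
Proof.
move=> u_neq0; rewrite /conformal_metric -scalemxAr -scalemxAl mulmx1 mxE.
rewrite mulr_gt0 ?conformal_factor_gt0 // mxE.
rewrite lt_neqAle sumr_ge0 => [|i _]; last by rewrite mxE -expr2 sqr_ge0.
rewrite andbT eq_sym psumr_eq0 => [|i _]; last by rewrite mxE -expr2 sqr_ge0.
apply: contra u_neq0 => /allP u0; apply/eqP/rowP => j.
by move: (u0 j (mem_index_enum j)); rewrite !mxE -expr2 sqrf_eq0 => /eqP.
Qed.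

Lemma sqr_norm_cart2 (r phi : R) : (r * cos phi) ^+ 2 + (r * sin phi) ^+ 2 = r ^+ 2.
Proof. by rewrite !exprMn -mulrDr cos2Dsin2 mulr1. Qed.

Lemma conformal_factor_polar (r phi : R) :
  conformal_factor (r * cos phi) (r * sin phi) = 1 + rho * r ^+ 2.
Proof. by rewrite /conformal_factor sqr_norm_cart2. Qed.

Lemma conformal_metric_polar (r phi : R) :
  (polJac r phi)^T *m conformal_metric (cart2 r phi) *m polJac r phi = gpol rho r.
Proof.
rewrite /conformal_metric !mxE !inordK //= conformal_factor_polar.
rewrite -scalemxAr -scalemxAl mulmx1; apply/matrixP => i j.
rewrite !mxE !big_ord_recr big_ord0 /= !mxE.
have := cos2Dsin2 phi; set c := cos phi; set s := sin phi => cs1.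
set D := 1 + rho * r ^+ 2.
by case: i => [[|[|i]] Hi] //; case: j => [[|[|j]] Hj] //=;
  rewrite -[RHS]mulr1 -cs1; ring.
Qed.

Section PolarForm.
Variables (r phi p1 p2 : R).
Hypothesis r_neq0 : r != 0.
Let cs1 := cos2Dsin2 phi.
Let D_neq0 : 1 + rho * r ^+ 2 != 0.
Proof. by rewrite -(conformal_factor_polar r phi) conformal_factor_neq0. Qed.

Lemma Hcart_polar :
  Hcart (r * cos phi) (r * sin phi) p1 p2
  = H0 rho xi r phi (Pr_of r phi p1 p2) (Pphi_of r phi p1 p2).
Proof.
rewrite /Hcart /H0 /Pr_of /Pphi_of conformal_factor_polar sqr_norm_cart2.
rewrite (sqr_norm_rot cs1).
by field; rewrite D_neq0 r_neq0.
Qed.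

Lemma Pphi_cart_polar :
  Pphi_cart (r * cos phi) (r * sin phi) p1 p2 = Pphi_of r phi p1 p2.
Proof. by rewrite /Pphi_cart /Pphi_of; ring. Qed.

Lemma S1cart_polar :
  S1cart (r * cos phi) (r * sin phi) p1 p2
  = S1pol rho xi r phi (Pr_of r phi p1 p2) (Pphi_of r phi p1 p2).
Proof.
rewrite /S1cart /S1pol /H0 /Pr_of /Pphi_of conformal_factor_polar.
rewrite (mul_rot cs1 p1 p2) (sqr_norm_rot cs1) cos_double sin_double.
by field; rewrite D_neq0 r_neq0.
Qed.

Lemma S2cart_polar :
  S2cart (r * cos phi) (r * sin phi) p1 p2
  = S2pol rho xi r phi (Pr_of r phi p1 p2) (Pphi_of r phi p1 p2).
Proof.
rewrite /S2cart /S2pol /H0 /Pr_of /Pphi_of conformal_factor_polar.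
rewrite (subr_sqr_rot cs1 p1 p2) (sqr_norm_rot cs1) cos_double sin_double.
by field; rewrite D_neq0 r_neq0.
Qed.

End PolarForm.

Lemma smooth_conformal_metric i j : smooth (fun x => conformal_metric x i j).
Proof.
move=> k; rewrite (_ : (fun x => _)
  = fun x : 'rV[R]_2 => conformal_factor x _[0] x _[1] * (i == j)%:R).
  by rewrite /conformal_factor; Ck_poly.
by apply/funext => x; rewrite !mxE.
Qed.

Lemma smooth_Hcart : smooth (fun x : 'rV[R]_4 => Hcart x _[0] x _[1] x _[2] x _[3]).
Proof.
move=> k; rewrite /Hcart; apply: Ck_mul; first by Ck_poly.
apply: Ck_inv => [x|]; first exact: conformal_factor2_neq0.
by rewrite /conformal_factor; Ck_poly.
Qed.

Lemma smooth_Pphi_cart : smooth (fun x : 'rV[R]_4 => Pphi_cart x _[0] x _[1] x _[2] x _[3]).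
Proof. by move=> k; rewrite /Pphi_cart; Ck_poly. Qed.

Lemma smooth_S1cart : smooth (fun x : 'rV[R]_4 => S1cart x _[0] x _[1] x _[2] x _[3]).
Proof.
move=> k; rewrite /S1cart; apply: Ck_add; first by Ck_poly.
apply: Ck_mul; first by Ck_poly.
apply: Ck_inv => [x|]; first exact: conformal_factor_neq0.
by rewrite /conformal_factor; Ck_poly.
Qed.

Lemma smooth_S2cart : smooth (fun x : 'rV[R]_4 => S2cart x _[0] x _[1] x _[2] x _[3]).
Proof.
move=> k; rewrite /S2cart; apply: Ck_add; first by Ck_poly.
apply: Ck_mul; first by Ck_poly.
apply: Ck_inv => [x|]; first exact: conformal_factor2_neq0.
by rewrite /conformal_factor; Ck_poly.
Qed.

End CartesianSystem.

Lemma cartT_coord {R : realType} (r phi p1 p2 : R) :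
  [/\ (cartT r phi p1 p2) _[0] = r * cos phi, (cartT r phi p1 p2) _[1] = r * sin phi,
      (cartT r phi p1 p2) _[2] = p1 & (cartT r phi p1 p2) _[3] = p2].
Proof. by rewrite !mxE !inordK. Qed.

Theorem theorem7 (R : realType) (rho xi : R) (hrho : 0 < rho) :
  exists (G : 'rV[R]_2 -> 'M[R]_2) (H Pphi S1 S2 : 'rV[R]_4 -> R),
    (* the metric extends to a smooth Riemannian metric on M = R^2 *)
    (forall i j, smooth (fun x => G x i j)) /\
    (forall x, (G x)^T = G x) /\
    (forall x (u : 'rV[R]_2), u != 0 -> 0 < (u *m G x *m u^T) ord0 ord0) /\
    (forall r phi, 0 < r ->
       (polJac r phi)^T *m G (cart2 r phi) *m polJac r phi = gpol rho r) /\
    (* the functions extend to smooth functions on T^*M = R^2 x R^2 *)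
    smooth H /\ smooth Pphi /\ smooth S1 /\ smooth S2 /\
    (forall r phi p1 p2, 0 < r ->
       let Pr := Pr_of r phi p1 p2 in
       let Pp := Pphi_of r phi p1 p2 in
       H (cartT r phi p1 p2) = H0 rho xi r phi Pr Pp /\
       Pphi (cartT r phi p1 p2) = Pp /\
       S1 (cartT r phi p1 p2) = S1pol rho xi r phi Pr Pp /\
       S2 (cartT r phi p1 p2) = S2pol rho xi r phi Pr Pp).
Proof.
have rho_ge0 := ltW hrho.
exists (conformal_metric rho).
exists (fun x => Hcart rho xi x _[0] x _[1] x _[2] x _[3]),
       (fun x => Pphi_cart x _[0] x _[1] x _[2] x _[3]),
       (fun x => S1cart rho xi x _[0] x _[1] x _[2] x _[3]),
       (fun x => S2cart rho xi x _[0] x _[1] x _[2] x _[3]).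
split; first exact: smooth_conformal_metric.
split; first exact: conformal_metric_sym.
split; first exact: conformal_metric_pos.
split; first by move=> r phi _; exact: conformal_metric_polar.
split; first exact: smooth_Hcart.
split; first exact: smooth_Pphi_cart.
split; first exact: smooth_S1cart.
split; first exact: smooth_S2cart.
move=> r phi p1 p2 /lt0r_neq0 r_neq0 /=; have [-> -> -> ->] := cartT_coord r phi p1 p2.
by rewrite Hcart_polar ?Pphi_cart_polar ?S1cart_polar ?S2cart_polar.
Qed.
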